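(* Let $(\mathcal{M},\mathcal{L})$ be a regular symplectic pair with $\mathcal{M},\mathcal{L}\in\mathbb{C}^{2n\times2n}$ and $\mathrm{ind}_\infty(\mathcal{M},\mathcal{L})=1$. Let $\hat n$, $\ell=n-\hat n$, $U_0,U_\infty\in\mathbb{C}^{2n\times\ell}$, $U_1\in\mathbb{C}^{2n\times2\hat n}$, $\mathbf{U}=[U_1\,|\,U_0,U_\infty]$ and a symplectic $\widehat{\mathcal{S}}\in\mathbb{C}^{2\hat n\times 2\hat n}$ satisfy $\mathbf{U}^H\mathcal{J}_n\mathbf{U}=\mathcal{J}_{\hat n}\oplus\mathcal{J}_\ell$, $\mathcal{M}U_0=0$, $\mathcal{L}U_\infty=0$, $\mathcal{M}U_1=\mathcal{L}U_1\widehat{\mathcal{S}}$. For each $\varepsilon>0$ let $\Phi^\varepsilon\in\mathbb{C}^{\ell\times\ell}$ be nonsingular with $\|\Phi^\varepsilon\|\le\varepsilon$, and set $$\mathcal{M}^\varepsilon=\mathcal{M}-\mathcal{L}U_0(\Phi^\varepsilon)^HU_\infty^H\mathcal{J}_n,\qquad \mathcal{L}^\varepsilon=\mathcal{L}+\mathcal{M}U_\infty\Phi^\varepsilon U_0^H\mathcal{J}_n.$$ Then $(\mathcal{M}^\varepsilon,\mathcal{L}^\varepsilon)$ is a regular symplectic pair with $\mathcal{L}^\varepsilon$ invertible, and $$\mathcal{M}^\varepsilon U_0=\mathcal{L}^\varepsilon U_0(\Phi^\varepsilon)^H,\quad \mathcal{M}^\varepsilon U_\infty\Phi^\varepsilon=\mathcal{L}^\varepsilon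 U_\infty,\quad \mathcal{M}^\varepsilon U_1=\mathcal{L}^\varepsilon U_1\widehat{\mathcal{S}},$$ and $(\mathcal{M}^\varepsilon,\mathcal{L}^\varepsilon)\to(\mathcal{M},\mathcal{L})$ as $\varepsilon\to0$.
   Context: $\mathcal{J}_m=\begin{bmatrix}0&I_m\\-I_m&0\end{bmatrix}$. $\mathcal{S}$ is symplectic if $\mathcal{S}\mathcal{J}_m\mathcal{S}^H=\mathcal{J}_m$. A pair $(\mathcal{M},\mathcal{L})$ is symplectic if $\mathcal{M}\mathcal{J}_n\mathcal{M}^H=\mathcal{L}\mathcal{J}_n\mathcal{L}^H$, regular if $\det(\mathcal{M}-\lambda\mathcal{L})\ne0$ for some $\lambda$. $\mathrm{ind}_\infty(A,B)$ is the nilpotency index of the nilpotent block $N$ in the Kronecker canonical form $PAQ=\mathrm{diag}(J,I)$, $PBQ=\mathrm{diag}(I,N)$ of a regular pair, and is $0$ if $B$ is invertible. *)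

From mathcomp Require Import all_boot all_algebra.
From mathcomp Require Import reals.
From mathcomp.real_closed Require Import complex.
Set Implicit Arguments. Unset Strict Implicit. Unset Printing Implicit Defensive.
Import GRing.Theory Num.Theory.
Local Open Scope ring_scope.

Definition ctr (R : realType) m n (A : 'M[R[i]]_(m, n)) : 'M[R[i]]_(n, m) :=
  (map_mx (fun z : R[i] => Num.conj z) A)^T.

Definition Jmx (R : realType) (m : nat) : 'M[R[i]]_(m + m) :=
  block_mx 0 1%:M (- 1%:M) 0.

Definition symplectic (R : realType) m (S : 'M[R[i]]_(m + m)) : Prop :=
  S *m Jmx R m *m ctr S = Jmx R m.

Definition symplectic_pair (R : realType) n (M L : 'M[R[i]]_(n + n)) : Prop :=
  M *m Jmx R n *m ctr M = L *m Jmx R n *m ctr L.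

Definition regular_pair (R : realType) m (M L : 'M[R[i]]_m) : Prop :=
  exists lambda : R[i], \det (M - lambda *: L) != 0.

Definition mxpow (R : realType) s (N : 'M[R[i]]_s) (k : nat) : 'M[R[i]]_s :=
  iter k (mulmx N) 1%:M.

Definition nil_index (R : realType) s (N : 'M[R[i]]_s) (k : nat) : Prop :=
  mxpow N k = 0 /\ (forall j, (j < k)%N -> mxpow N j != 0).

(* ind_inf(A, B) = k : in a Weierstrass/Kronecker canonical form
   P A Q = diag(J, I), P B Q = diag(I, N) with N nilpotent, N has
   nilpotency index k (k = 0 iff the N block is empty, i.e. B invertible). *)
Definition ind_inf (R : realType) m (A B : 'M[R[i]]_m) (k : nat) : Prop :=
  exists (r s : nat) (e : (r + s = m)%N) (P Q : 'M[R[i]]_m)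
         (J : 'M[R[i]]_r) (N : 'M[R[i]]_s),
    [/\ P \in unitmx, Q \in unitmx,
        P *m A *m Q = castmx (e, e) (block_mx J 0 0 1%:M),
        P *m B *m Q = castmx (e, e) (block_mx 1%:M 0 0 N)
      & nil_index N k].

Definition cabs2 (R : realType) (z : R[i]) : R :=
  complex.Re z ^+ 2 + complex.Im z ^+ 2.

Definition vnorm2 (R : realType) l (x : 'cV[R[i]]_l) : R :=
  \sum_(i < l) cabs2 (x i 0).

Definition spec_norm_le (R : realType) l k (Phi : 'M[R[i]]_(l, k)) (eps : R) : Prop :=
  0 <= eps /\ forall x : 'cV[R[i]]_k, vnorm2 (Phi *m x) <= eps ^+ 2 * vnorm2 x.

(* A_eps --> A as eps --> 0+ (entrywise, equivalently in any norm) *)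
Definition mx_cvg0 (R : realType) m n (Aeps : R -> 'M[R[i]]_(m, n)) (A : 'M[R[i]]_(m, n)) : Prop :=
  forall delta : R, 0 < delta -> exists eta : R, 0 < eta /\
    forall eps : R, 0 < eps -> eps < eta ->
      forall i j, Num.sqrt (cabs2 (Aeps eps i j - A i j)) < delta.

From mathcomp Require Import all_boot all_order all_algebra.
From mathcomp Require Import reals lra.
From mathcomp.real_closed Require Import complex.
Set Implicit Arguments. Unset Strict Implicit. Unset Printing Implicit Defensive.
Import Order.TTheory GRing.Theory Num.Theory.
Local Open Scope ring_scope.

(* The J-orthogonality relations packed in U^H J U = J_nh (+) J_l make the
   rank-l corrections vanish on U1 and act on U0, Uinf exactly as required.
   Hence L^eps U = [L U1 | L U0 | M Uinf Phi], while for lam with M - lam L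
   invertible, (M - lam L) U = [L U1 (Shat - lam) | -lam L U0 | M Uinf]; since U
   has full rank, [L U1 | L U0 | M Uinf] has full rank, so L^eps is invertible
   and the pair is regular.  Symplecticity is a direct expansion using J^2 = -I,
   J^H = -J and the isotropy of U0 and Uinf.  Convergence holds because the
   corrections are linear in Phi^eps, whose entries are bounded by eps. *)

Section ConjugateTranspose.
Variable R : realType.
Implicit Types m n p : nat.

Lemma ctrM m n p (A : 'M[R[i]]_(m, n)) (B : 'M[R[i]]_(n, p)) :
  ctr (A *m B) = ctr B *m ctr A.
Proof. by rewrite /ctr map_mxM trmx_mul. Qed.

Lemma ctrK m n (A : 'M[R[i]]_(m, n)) : ctr (ctr A) = A.
Proof. by apply/matrixP=> i j; rewrite /ctr !mxE conjCK. Qed.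

Lemma ctrD m n (A B : 'M[R[i]]_(m, n)) : ctr (A + B) = ctr A + ctr B.
Proof. by rewrite /ctr map_mxD linearD. Qed.

Lemma ctrB m n (A B : 'M[R[i]]_(m, n)) : ctr (A - B) = ctr A - ctr B.
Proof. by rewrite /ctr map_mxB linearB. Qed.

Lemma ctr_row_mx m n1 n2 (A : 'M[R[i]]_(m, n1)) (B : 'M[R[i]]_(m, n2)) :
  ctr (row_mx A B) = col_mx (ctr A) (ctr B).
Proof. by rewrite /ctr map_row_mx tr_row_mx. Qed.

Lemma ctr_Jmx n : ctr (Jmx R n) = - Jmx R n.
Proof.
rewrite /ctr /Jmx map_block_mx map_mxN map_mx1 !map_mx0 tr_block_mx.
rewrite !trmx0 trmx1 raddfN /= trmx1 opp_block_mx oppr0 opprK.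
by congr block_mx; apply/matrixP=> i j; rewrite !mxE.
Qed.

Lemma Jmx_sqr n : Jmx R n *m Jmx R n = - 1%:M.
Proof.
rewrite /Jmx mulmx_block !mul0mx !mulmx0 !mul1mx !mulmx1 !add0r !addr0.
by rewrite (scalar_mx_block n n 1) opp_block_mx oppr0.
Qed.

Lemma Jmx_unit n : Jmx R n \in unitmx.
Proof.
have JJN : Jmx R n *m - Jmx R n = 1%:M by rewrite mulmxN Jmx_sqr opprK.
by case/mulmx1_unit: JJN.
Qed.

End ConjugateTranspose.

Lemma regular_pair_of_unit (R : realType) n (A B : 'M[R[i]]_n) :
  B \in unitmx -> regular_pair A B.
Proof.
move=> uB; set C := A *m invmx B.
have /closed_nonrootP [lam not_root] : char_poly C != 0.
  exact/monic_neq0/char_poly_monic.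
exists lam.
have uC : C - lam%:M \in unitmx.
  rewrite -row_free_unit -kermx_eq0.
  by move: not_root; rewrite -eigenvalue_root_char /eigenvalue /eigenspace negbK.
have -> : A - lam *: B = (C - lam%:M) *m B.
  by rewrite mulmxBl mulmxKV // mul_scalar_mx.
by rewrite -unitfE -unitmxE unitmx_mul uC uB.
Qed.

Section EntrywiseConvergence.
Variable R : realType.
Implicit Types (m n k : nat) (z : R[i]).

Definition cmod z : R := Num.sqrt (cabs2 z).

Lemma cmodE z : `|z| = (cmod z)%:C%C.
Proof. by rewrite normc_def. Qed.

Lemma cmod_ge0 z : 0 <= cmod z.
Proof. exact: sqrtr_ge0. Qed.

Lemma cmodM z w : cmod (z * w) = cmod z * cmod w.
Proof. by apply: (@complexI R); rewrite rmorphM /= -!cmodE normrM. Qed.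

Lemma cmod_conj z : cmod z^* = cmod z.
Proof. by apply: (@complexI R); rewrite -!cmodE norm_conjC. Qed.

Lemma cmod_sum k (f : 'I_k -> R[i]) :
  cmod (\sum_(a < k) f a) <= \sum_(a < k) cmod (f a).
Proof.
rewrite -lecR -cmodE rmorph_sum /=; apply: le_trans (ler_norm_sum _ _ _) _.
by apply: ler_sum => a _; rewrite cmodE.
Qed.

Lemma spec_norm_le_entry k (P : 'M[R[i]]_k) e :
  spec_norm_le P e -> forall a b, cmod (P a b) <= e.
Proof.
move=> [e_ge0 Pe] a b; have := Pe (delta_mx b 0); rewrite -colE.
have -> : vnorm2 (delta_mx b 0 : 'cV[R[i]]_k) = 1.
  rewrite /vnorm2 (bigD1 b) //= big1 => [|c cb]; rewrite mxE.
    by rewrite !eqxx /cabs2 /= expr1n expr0n /= !addr0.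
  by rewrite (negbTE cb) /cabs2 /= expr0n /= addr0.
rewrite mulr1 => col_le; have Pab_le : cabs2 (P a b) <= e ^+ 2.
  apply: le_trans col_le; rewrite /vnorm2 (bigD1 a) //= mxE lerDl.
  by apply: sumr_ge0 => c _; rewrite /cabs2 addr_ge0 ?sqr_ge0.
by rewrite /cmod -(ger0_norm e_ge0) -sqrtr_sqr ler_wsqrtr.
Qed.

Lemma mulmx_entry_le m k k' n (A : 'M[R[i]]_(m, k)) (P : 'M[R[i]]_(k, k'))
    (B : 'M[R[i]]_(k', n)) e i j :
  (forall a b, cmod (P a b) <= e) ->
  cmod ((A *m P *m B) i j) <= e * \sum_(b < k') \sum_(a < k) cmod (A i a) * cmod (B b j).
Proof.
move=> Pe; rewrite !mxE; apply: le_trans (cmod_sum _) _.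
rewrite mulr_sumr; apply: ler_sum => b _; rewrite cmodM !mxE mulr_sumr.
apply: le_trans (ler_wpM2r (cmod_ge0 _) (cmod_sum _)) _.
rewrite mulr_suml; apply: ler_sum => a _; rewrite cmodM mulrAC [e * _]mulrC.
by apply: ler_wpM2l; rewrite ?mulr_ge0 ?cmod_ge0.
Qed.

Lemma mx_cvg0_addmul m k k' n (A : 'M[R[i]]_(m, k)) (B : 'M[R[i]]_(k', n))
    (P : R -> 'M[R[i]]_(k, k')) (F : R -> 'M[R[i]]_(m, n)) (F0 : 'M[R[i]]_(m, n)) :
  (forall eps, 0 < eps -> forall a b, cmod (P eps a b) <= eps) ->
  (forall eps, 0 < eps -> F eps = F0 + A *m P eps *m B) -> mx_cvg0 F F0.
Proof.
move=> Pe FE delta delta_gt0.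
pose C i j := \sum_(b < k') \sum_(a < k) cmod (A i a) * cmod (B b j).
have C_ge0 i j : 0 <= C i j.
  by do 2!apply: sumr_ge0 => ? _; rewrite mulr_ge0 ?cmod_ge0.
pose T := 1 + \sum_i \sum_j C i j.
have C_le i j : C i j <= T.
  have le_1_add x y : 0 <= x -> 0 <= y -> C i j <= 1 + (C i j + x + y) by lra.
  rewrite /T (bigD1 i) //= (bigD1 j) //= le_1_add //.
    exact: sumr_ge0.
  by do 2!apply: sumr_ge0 => ? _.
have T_gt0 : 0 < T.
  have : 0 <= \sum_i \sum_j C i j by do 2!apply: sumr_ge0 => ? _.
  rewrite /T; lra.
exists (delta / T); split=> [|eps eps_gt0 eps_lt i j]; first exact: divr_gt0.
rewrite FE // mxE addrAC subrr add0r.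
apply: le_lt_trans (mulmx_entry_le A B i j (Pe eps eps_gt0)) _.
apply: le_lt_trans (ler_wpM2l (ltW eps_gt0) (C_le i j)) _.
by rewrite -ltr_pdivlMr.
Qed.

End EntrywiseConvergence.

Lemma perturbed_form_eq (R : realType) n k (K M L : 'M[R[i]]_n)
    (U V : 'M[R[i]]_(n, k)) (P : 'M[R[i]]_k) :
  K *m K = - 1%:M -> ctr K = - K ->
  ctr U *m K *m U = 0 -> ctr V *m K *m V = 0 ->
  M *m K *m ctr M = L *m K *m ctr L ->
  let Mp := M - L *m U *m ctr P *m ctr V *m K in
  let Lp := L + M *m V *m P *m ctr U *m K in
  Mp *m K *m ctr Mp = Lp *m K *m ctr Lp.
Proof.
move=> KK K_skew UKU VKV MKL Mp Lp.
have KKr p (X : 'M[R[i]]_(n, p)) : K *m (K *m X) = - X.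
  by rewrite mulmxA KK mulNmx mul1mx.
have UKUr p (X : 'M[R[i]]_(k, p)) : ctr U *m (K *m (U *m X)) = 0.
  by rewrite !mulmxA UKU mul0mx.
have VKVr p (X : 'M[R[i]]_(k, p)) : ctr V *m (K *m (V *m X)) = 0.
  by rewrite !mulmxA VKV mul0mx.
rewrite /Mp /Lp ctrB ctrD !ctrM !ctrK K_skew.
(* Abstracting the adjoints stops the rewrites below from unfolding [ctr],
   which would make them very slow. *)
move: UKUr VKVr MKL; move: (ctr M) (ctr L) (ctr U) (ctr V) (ctr P).
move=> cM cL cU cV cP UKUr VKVr MKL.
rewrite !(mulmxBl, mulmxBr, mulmxDl, mulmxDr, mulmxN, mulNmx) -!mulmxA.
rewrite -!mulmxA in MKL.
rewrite !KKr ?mulmxN ?mulNmx ?UKUr ?VKVr ?mulmxN ?mulmx0 ?oppr0 ?subr0 ?opprK MKL.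
by rewrite !addr0 addrAC.
Qed.

Section Perturbation.
Variables (R : realType) (nh l : nat).
Local Notation n := (nh + l)%N.
Local Notation J := (Jmx R n).
Variables (M L : 'M[R[i]]_(n + n)) (U1 : 'M[R[i]]_(n + n, nh + nh))
  (U0 Uinf : 'M[R[i]]_(n + n, l)) (Shat : 'M[R[i]]_(nh + nh)) (P : 'M[R[i]]_l).
Local Notation U := (row_mx U1 (row_mx U0 Uinf)).
Hypothesis UJU : ctr U *m J *m U = block_mx (Jmx R nh) 0 0 (Jmx R l).
Hypotheses (MU0 : M *m U0 = 0) (LUinf : L *m Uinf = 0) (MU1 : M *m U1 = L *m U1 *m Shat).

Lemma UJU_blocks :
  (ctr U0 *m (J *m U1) = 0 /\ ctr Uinf *m (J *m U1) = 0) /\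
  [/\ ctr U0 *m (J *m U0) = 0, ctr U0 *m (J *m Uinf) = 1%:M,
      ctr Uinf *m (J *m U0) = - 1%:M & ctr Uinf *m (J *m Uinf) = 0].
Proof.
rewrite !mulmxA; move: UJU.
rewrite !ctr_row_mx mul_col_mx (mul_col_mx (ctr U0)) !mul_mx_row !mul_col_mx.
rewrite block_mxEh.
case/eq_row_mx => /eq_col_mx [_]; rewrite -col_mx0 => /eq_col_mx [E1 E2].
rewrite -block_mxEh block_mxEv => /eq_col_mx [_].
rewrite -block_mxEh /Jmx => /eq_block_mx [E3 E4 E5 E6].
by rewrite E1 E2 E3 E4 E5 E6.
Qed.

Local Notation Me := (M - L *m U0 *m ctr P *m ctr Uinf *m J).
Local Notation Le := (L + M *m Uinf *m P *m ctr U0 *m J).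

Lemma Me_U0 : Me *m U0 = L *m U0 *m ctr P.
Proof.
have [_ [_ _ UinfJU0 _]] := UJU_blocks.
by rewrite mulmxBl -!mulmxA UinfJU0 MU0 !mulmxN mulmx1 sub0r opprK !mulmxA.
Qed.

Lemma Le_U0 : Le *m U0 = L *m U0.
Proof.
have [_ [U0JU0 _ _ _]] := UJU_blocks.
by rewrite mulmxDl -!mulmxA U0JU0 !mulmx0 addr0.
Qed.

Lemma Me_Uinf : Me *m Uinf = M *m Uinf.
Proof.
have [_ [_ _ _ UinfJUinf]] := UJU_blocks.
by rewrite mulmxBl -!mulmxA UinfJUinf !mulmx0 subr0.
Qed.

Lemma Le_Uinf : Le *m Uinf = M *m Uinf *m P.
Proof.
have [_ [_ U0JUinf _ _]] := UJU_blocks.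
by rewrite mulmxDl -!mulmxA U0JUinf mulmx1 LUinf add0r !mulmxA.
Qed.

Lemma Me_U1 : Me *m U1 = M *m U1.
Proof.
have [[_ UinfJU1] _] := UJU_blocks.
by rewrite mulmxBl -!mulmxA UinfJU1 !mulmx0 subr0.
Qed.

Lemma Le_U1 : Le *m U1 = L *m U1.
Proof.
have [[U0JU1 _] _] := UJU_blocks.
by rewrite mulmxDl -!mulmxA U0JU1 !mulmx0 addr0.
Qed.

Lemma symplectic_pair_perturbed : symplectic_pair M L -> symplectic_pair Me Le.
Proof.
have [_ [U0JU0 _ _ UinfJUinf]] := UJU_blocks.
by apply: perturbed_form_eq; rewrite ?Jmx_sqr ?ctr_Jmx -?mulmxA.
Qed.

Lemma rank_U : \rank U = ((nh + nh) + (l + l))%N.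
Proof.
apply/eqP; rewrite eqn_leq rank_leq_col /=.
have := mxrankM_maxr (ctr U *m J) U.
by rewrite UJU rank_diag_block_mx !mxrank_unit ?Jmx_unit.
Qed.

Lemma Le_unit : regular_pair M L -> P \in unitmx -> Le \in unitmx.
Proof.
move=> [lam detQ] uP; set Q := M - lam *: L.
have uQ : Q \in unitmx by rewrite unitmxE unitfE.
set X := row_mx (L *m U1) (row_mx (L *m U0) (M *m Uinf)).
have QU : Q *m U = X *m block_mx (Shat - lam%:M) 0 0 (block_mx (- lam%:M) 0 0 1%:M).
  rewrite /Q /X !mul_mx_row !mul_row_block !mulmx0 !addr0 !add0r mulmx1.
  rewrite !mulmxBl MU1 MU0 -!scalemxAl LUinf scaler0 subr0 sub0r.
  by rewrite mulmxBr mulmxN !mul_mx_scalar.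
have LeU : Le *m U = X *m block_mx 1%:M 0 0 (block_mx 1%:M 0 0 P).
  rewrite /X !mul_mx_row !mul_row_block !mulmx0 !addr0 !add0r !mulmx1.
  by rewrite Le_U1 Le_U0 Le_Uinf.
have D'free :
    row_free (block_mx 1%:M 0 0 (block_mx 1%:M 0 0 P) : 'M_((nh + nh) + (l + l))).
  by rewrite row_free_unit !block_diag_mx_unit !unitmx1 uP.
have QU_rank : \rank (Q *m U) = \rank U by rewrite eqmxMfull ?row_full_unit.
have : (\rank U <= \rank Le)%N.
  rewrite -QU_rank QU (leq_trans (mxrankM_maxl _ _)) //.
  by rewrite -(mxrankMfree X D'free) -LeU mxrankM_maxl.
rewrite rank_U addnACA => rank_Le.
by rewrite -row_free_unit /row_free eqn_leq rank_leq_row.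
Qed.

Lemma perturbed_pair_spec :
  regular_pair M L -> symplectic_pair M L -> P \in unitmx ->
  [/\ regular_pair Me Le, symplectic_pair Me Le, Le \in unitmx
    & [/\ Me *m U0 = Le *m U0 *m ctr P, Me *m Uinf *m P = Le *m Uinf
        & Me *m U1 = Le *m U1 *m Shat]].
Proof.
move=> reg sympl uP; have uLe := Le_unit reg uP.
split; [exact: regular_pair_of_unit | exact: symplectic_pair_perturbed | by [] |].
by rewrite Me_U0 Le_U0 Me_Uinf Le_Uinf Me_U1 Le_U1 MU1.
Qed.

End Perturbation.

Theorem theorem2p7 (R : realType) (nh l : nat)
  (M L : 'M[R[i]]_((nh + l) + (nh + l)))
  (U1 : 'M[R[i]]_((nh + l) + (nh + l), nh + nh))
  (U0 Uinf : 'M[R[i]]_((nh + l) + (nh + l), l))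
  (Shat : 'M[R[i]]_(nh + nh))
  (Phi : R -> 'M[R[i]]_l) :
  regular_pair M L ->
  symplectic_pair M L ->
  ind_inf M L 1 ->
  symplectic Shat ->
  ctr (row_mx U1 (row_mx U0 Uinf)) *m Jmx R (nh + l) *m row_mx U1 (row_mx U0 Uinf)
    = block_mx (Jmx R nh) 0 0 (Jmx R l) ->
  M *m U0 = 0 ->
  L *m Uinf = 0 ->
  M *m U1 = L *m U1 *m Shat ->
  (forall eps : R, 0 < eps -> Phi eps \in unitmx /\ spec_norm_le (Phi eps) eps) ->
  let Meps := fun eps : R =>
    M - L *m U0 *m ctr (Phi eps) *m ctr Uinf *m Jmx R (nh + l) in
  let Leps := fun eps : R =>
    L + M *m Uinf *m Phi eps *m ctr U0 *m Jmx R (nh + l) in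
  (forall eps : R, 0 < eps ->
     [/\ regular_pair (Meps eps) (Leps eps),
         symplectic_pair (Meps eps) (Leps eps),
         Leps eps \in unitmx
       & [/\ Meps eps *m U0 = Leps eps *m U0 *m ctr (Phi eps),
              Meps eps *m Uinf *m Phi eps = Leps eps *m Uinf
            & Meps eps *m U1 = Leps eps *m U1 *m Shat]])
  /\ mx_cvg0 Meps M /\ mx_cvg0 Leps L.
Proof.
(* The index condition and the symplecticity of Shat are not needed: they
   serve only to guarantee that U0, Uinf and U1 exist. *)
move=> reg sympl _ _ UJU MU0 LUinf MU1 Phi_small Meps Leps.
have Phi_entry eps : 0 < eps -> forall a b, cmod (Phi eps a b) <= eps.
  by move=> /Phi_small [_ /spec_norm_le_entry].
split; [|split].
- move=> eps /Phi_small [uPhi _].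
  exact: perturbed_pair_spec UJU MU0 LUinf MU1 reg sympl uPhi.
- apply: (@mx_cvg0_addmul _ _ _ _ _ (- (L *m U0)) (ctr Uinf *m Jmx R (nh + l))
    (fun eps => ctr (Phi eps))) => [eps /Phi_entry Phi_le a b|eps _].
    by rewrite /ctr !mxE cmod_conj.
  by rewrite /Meps !mulmxA !mulNmx.
- apply: (@mx_cvg0_addmul _ _ _ _ _ (M *m Uinf) (ctr U0 *m Jmx R (nh + l)) Phi)
    => //.
  by move=> eps _; rewrite /Leps !mulmxA.
Qed.
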